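(* Let $r,n\ge1$ and let $q\ge0$ be a real parameter. Then for every $w\in W_{r,n}$, $$(rq+1)^{\ell_n(w)}=\sum_{j=0}^n\binom{q+n-j}{n}\phi^n_j(w),$$ where $\binom{x}{n}=\frac{x(x-1)\cdots(x-n+1)}{n!}$ is the generalized binomial coefficient.
   Context: $W_{r,n}=\mathbb{Z}_r\wr\mathfrak{S}_n$ is the group of $r$-colored permutations $w=w(1)^{c_1}\cdots w(n)^{c_n}$ ($w(1)\cdots w(n)\in\mathfrak S_n$, $c_i\in\{0,\dots,r-1\}$). $\ell_n(w)$ is the number of cycles of the permutation $w(1)\cdots w(n)$ whose color (sum mod $r$ of the colors $c_i$ of its entries) is $0$. Set $\chi^n_k(w)=(rk+1)^{\ell_n(w)}$ for integers $k\ge0$ and define the Foulkes characters $\phi^n_j=\sum_{i=0}^j(-1)^i\binom{n+1}{i}\chi^n_{j-i}$, $j=0,\dots,n$. *)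

From mathcomp Require Import all_boot all_order all_algebra all_fingroup all_solvable.
Set Implicit Arguments. Unset Strict Implicit. Unset Printing Implicit Defensive.
Import Order.TTheory GRing.Theory Num.Theory.
Local Open Scope ring_scope.

Definition colperm (r n : nat) : Type := ('S_n * {ffun 'I_n -> 'I_r})%type.

Definition cycle_color (r n : nat) (c : {ffun 'I_n -> 'I_r}) (C : {set 'I_n}) : nat :=
  ((\sum_(i in C) nat_of_ord (c i)) %% r)%N.

Definition ell (r n : nat) (w : colperm r n) : nat :=
  #|[set C in porbits w.1 | cycle_color w.2 C == 0%N]|.

Definition chi (R : nzRingType) (r n k : nat) (w : colperm r n) : R :=
  ((r * k + 1)%:R) ^+ ell w.

Definition foulkes (R : nzRingType) (r n j : nat) (w : colperm r n) : R :=
  \sum_(0 <= i < j.+1) (-1) ^+ i * ('C(n.+1, i))%:R * chi R (j - i) w.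

Definition gbinom (R : fieldType) (x : R) (n : nat) : R :=
  (\prod_(0 <= k < n) (x - k%:R)) / (n`!)%:R.

(* Both sides are polynomials in q of degree at most n, because ell w <= n.
   At q = m with 0 <= m <= n the generalized binomials become 'C(m + n - j, n),
   and summing the Foulkes characters against them undoes the convolution with
   the coefficients of (1 - X)^(n+1) that defines them, leaving
   chi_m(w) = (r m + 1)^(ell w).  Agreement at the n + 1 points 0, ..., n
   forces the two polynomials to coincide. *)

From mathcomp Require Import all_boot all_order all_algebra all_fingroup.
From mathcomp Require Import zify ring.
Import Order.TTheory GRing.Theory Num.Theory.
Local Open Scope ring_scope.

Lemma sum_alt_binom_binom (R : comNzRingType) n d :
  \sum_(i < d.+1) (-1) ^+ i * 'C(n.+1, i)%:R * 'C(n + d - i, n)%:R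
  = (d == 0)%:R :> R.
Proof.
elim: n d => [|n IHn] d.
  case: d => [|d]; first by rewrite big_ord1 !bin0 expr0 !mul1r.
  rewrite 2!big_ord_recl big1 => [|i _]; last by rewrite bin_small ?mulr0 ?mul0r.
  by rewrite /= !bin0 bin1 expr0 expr1 !mul1r mulr1 addr0 mulN1r subrr.
rewrite -IHn.
pose sgn i : R := (-1) ^+ i * 'C(n.+1, i)%:R.
pose x i : R := 'C(n.+1 + d - i, n.+1)%:R.
pose y i : R := 'C(n + d - i, n.+1)%:R.
have Pascal_x (i : 'I_d.+1) : x i = 'C(n + d - i, n)%:R + y i.
  rewrite /x /y; have -> : (n.+1 + d - i = (n + d - i).+1)%N by have := ltn_ord i; lia.
  by rewrite binS natrD addrC.
have -> : \sum_(i < d.+1) (-1) ^+ i * 'C(n.+2, i)%:R * x i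
    = \sum_(i < d.+1) sgn i * x i - \sum_(i < d.+1) sgn i * y i.
  rewrite [X in _ = _ - X]big_ord_recr /= {2}/y addnK bin_small // mulr0 addr0.
  rewrite !big_ord_recl -addrA -sumrB; congr (_ + _).
  apply: eq_bigr => i _; rewrite /x /y /sgn !lift0 /= binS natrD exprS.
  by rewrite addSn subSS; ring.
by rewrite -sumrB; apply: eq_bigr => i _; rewrite -mulrBr Pascal_x addrK.
Qed.

Lemma sum_alt_binom_binom_shift (R : comNzRingType) n m e : (m <= n)%N ->
  \sum_(i < e.+1) (-1) ^+ i * 'C(n.+1, i)%:R * 'C(m + e - i, n)%:R
  = (m + e == n)%:R :> R.
Proof.
move=> le_mn.
pose F i : R := (-1) ^+ i * 'C(n.+1, i)%:R * 'C(m + e - i, n)%:R.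
have F0 i : (m + e - i < n)%N -> F i = 0.
  by move=> small; rewrite /F (bin_small small) mulr0.
have [lt_men | le_nme] := ltnP (m + e) n.
  rewrite big1 => [|i _]; last by apply: F0; lia.
  by rewrite ltn_eqF.
pose d := (m + e - n)%N.
rewrite -(big_mkord xpredT F) (big_cat_nat _ (n := d.+1)) //=; last by lia.
rewrite [X in _ + X]big_nat_cond [X in _ + X]big1 ?addr0 => [|i]; last first.
  by case/andP=> /andP[lt_di lt_ie] _; apply: F0; rewrite /d in lt_di; lia.
have -> : (m + e == n) = (d == 0)%N by apply/eqP/eqP; lia.
rewrite big_mkord -(sum_alt_binom_binom R n d); apply: eq_bigr => i _.
by rewrite /F; have -> : (m + e - i = n + d - i)%N by have := ltn_ord i; lia.
Qed.

Lemma alt_binom_conv_inversion (R : comNzRingType) n m (F : nat -> R) :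
  (m <= n)%N ->
  \sum_(0 <= j < n.+1) 'C(m + (n - j), n)%:R *
    \sum_(0 <= i < j.+1) (-1) ^+ i * 'C(n.+1, i)%:R * F (j - i)%N = F m.
Proof.
(* With alt = (1 - 'X)^+n.+1 and B = \sum_e 'C(m + e, n) 'X^e, the left-hand
   side is the n-th coefficient of alt * Fp * B; as alt * B = 'X^(n - m)
   modulo 'X^n.+1, regrouping it as Fp * (alt * B) isolates F m. *)
move=> le_mn.
pose alt : {poly R} := \poly_(i < n.+2) ((-1) ^+ i * 'C(n.+1, i)%:R).
pose Fp : {poly R} := \poly_(k < n.+1) F k.
pose B : {poly R} := \poly_(e < n.+1) 'C(m + e, n)%:R.
have coef_altB (k : 'I_n.+1) : (alt * B)`_(n - k) = (k == m :> nat)%:R.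
  have -> : (k == m :> nat) = (m + (n - k) == n)%N by apply/eqP/eqP; have := ltn_ord k; lia.
  rewrite -(@sum_alt_binom_binom_shift R n m (n - k) le_mn) coefM.
  apply: eq_bigr => i _; have := ltn_ord i; have := ltn_ord k => lt_kn lt_ik.
  rewrite !coef_poly.
  have -> : (i < n.+2)%N by lia.
  have -> : (n - k - i < n.+1)%N by lia.
  by rewrite addnBA // -ltnS.
transitivity ((alt * Fp * B)`_n).
  rewrite coefM big_mkord; apply: eq_bigr => j _; have := ltn_ord j => lt_jn.
  rewrite mulrC coef_poly ifT; last by lia.
  congr (_ * _); rewrite coefM big_mkord; apply: eq_bigr => i _.
  have := ltn_ord i => lt_ij.
  by rewrite !coef_poly ifT ?ifT //; lia.
rewrite mulrAC mulrC coefM.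
under eq_bigr => k _ do rewrite coef_altB coef_poly ltn_ord mulr_natr mulrb.
by rewrite -big_mkcond big_ord1_eq ltnS le_mn.
Qed.

Lemma gbinom_nat (R : numFieldType) N n : gbinom (N%:R : R) n = 'C(N, n)%:R.
Proof.
have ffactE : \prod_(0 <= k < n) (N%:R - k%:R) = (N ^_ n)%:R :> R.
  elim: n => [|n IHn]; first by rewrite big_nil ffactn0.
  rewrite big_nat_recr //= IHn ffactnSr natrM.
  have [le_nN | lt_Nn] := leqP n N; first by rewrite natrB.
  by rewrite ffact_small // !mul0r.
by rewrite /gbinom ffactE -bin_ffact natrM mulfK // pnatr_eq0 -lt0n fact_gt0.
Qed.

Definition shifted_binom_poly {R : fieldType} (a : R) n : {poly R} :=
  (n`!%:R)^-1 *: \prod_(0 <= k < n) ('X - (k%:R - a)%:P).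

Lemma horner_shifted_binom_poly (R : fieldType) (a x : R) n :
  (shifted_binom_poly a n).[x] = gbinom (x + a) n.
Proof.
rewrite hornerZ horner_prod /gbinom mulrC.
by congr (_ * _); apply: eq_bigr => k _; rewrite hornerXsubC opprB addrA addrAC.
Qed.

Lemma size_shifted_binom_poly (R : fieldType) (a : R) n :
  (size (shifted_binom_poly a n) <= n.+1)%N.
Proof.
by rewrite (leq_trans (size_scale_leq _ _)) // size_prod_XsubC size_iota subn0.
Qed.

Lemma size_exp_scaleXaddC_leq (R : nzRingType) (a b : R) k :
  (size ((a *: 'X + b%:P) ^+ k) <= k.+1)%N.
Proof.
rewrite (leq_trans (size_poly_exp_leq _ _)) // ltnS -[leqRHS]mul1n leq_mul2r.
by rewrite -mul_polyC size_MXaddC; case: ifP => _; rewrite /= ?size_polyC_leq1 ?orbT.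
Qed.

Lemma poly_natr_roots_eq0 (R : numDomainType) n (p : {poly R}) :
  (size p <= n.+1)%N -> (forall m, (m <= n)%N -> p.[m%:R] = 0) -> p = 0.
Proof.
move=> size_p p_natr_root.
apply: (@roots_geq_poly_eq0 _ p [seq m%:R | m <- iota 0 n.+1]).
- apply/allP => x /mapP[m]; rewrite mem_iota ltnS => /andP[_ le_mn] ->.
  exact/rootP/p_natr_root.
- by rewrite map_inj_uniq ?iota_uniq // => i j /eqP; rewrite eqr_nat => /eqP.
- by rewrite size_map size_iota.
Qed.

Lemma ell_leq r n (w : colperm r n) : (ell w <= n)%N.
Proof.
rewrite /ell setIdE (leq_trans (subset_leq_card (subsetIl _ _))) //.
by rewrite (leq_trans (leq_imset_card _ _)) ?card_ord.
Qed.

Theorem mainTheorem8 (R : realFieldType) (r n : nat) (q : R)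
  (hr : (1 <= r)%N) (hn : (1 <= n)%N) (hq : 0 <= q) (w : colperm r n) :
  (r%:R * q + 1) ^+ ell w =
  \sum_(0 <= j < n.+1) gbinom (q + (n - j)%:R) n * foulkes R j w.
Proof.
(* The identity is polynomial in q. *)
pose P : {poly R} := \sum_(0 <= j < n.+1) foulkes R j w *: shifted_binom_poly (n - j)%:R n
  - (r%:R *: 'X + 1%:P) ^+ ell w.
have hornerP x : P.[x] =
    \sum_(0 <= j < n.+1) gbinom (x + (n - j)%:R) n * foulkes R j w - (r%:R * x + 1) ^+ ell w.
  rewrite hornerD hornerN horner_sum horner_exp hornerD hornerZ hornerX hornerC.
  by congr (_ - _); apply: eq_bigr => j _; rewrite hornerZ horner_shifted_binom_poly mulrC.
suff P0 : P = 0 by apply/eqP; rewrite eq_sym -subr_eq0 -hornerP P0 horner0.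
apply: (@poly_natr_roots_eq0 _ n).
  suff : P \is a poly_of_size n.+1 by rewrite qualifE.
  apply: rpredB; first by apply: rpred_sum => j _; apply/rpredZ/size_shifted_binom_poly.
  by rewrite unfold_in /= (leq_trans (size_exp_scaleXaddC_leq _ _ _ _)) ?ltnS ?ell_leq.
move=> m le_mn; apply/eqP; rewrite hornerP subr_eq0; apply/eqP.
under eq_bigr => j _ do rewrite -natrD gbinom_nat.
by rewrite /foulkes (@alt_binom_conv_inversion _ _ _ (fun k => chi R k w)) // /chi natrD natrM.
Qed.
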